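(* Let $X$ be a random vector with values in $\mathcal{X}\subset\mathbb{R}^d$ whose distribution has a density $f$ with respect to Lebesgue measure $Leb$. Assume that $f$ is bounded ($\|f\|_\infty<\infty$) and that $\mathbb{P}\{f(X)=c\}=0$ for all $c\ge 0$. Define, for $t>0$, $$\textsc{EM}^*(t)=\max_{\Omega\ \text{Borel}}\big\{\mathbb{P}(X\in\Omega)-t\,Leb(\Omega)\big\},\qquad \lambda(t)=Leb(\{x\in\mathcal{X}: f(x)\ge t\}).$$ Then $\textsc{EM}^*$ is differentiable on $(0,\infty)$ with $\textsc{EM}^{*\prime}(t)=-\lambda(t)$ for all $t>0$. Moreover, since $t\mapsto\lambda(t)$ is decreasing, $\textsc{EM}^*$ is convex.
   Context: $Leb$ denotes Lebesgue measure on $\mathbb{R}^d$. *)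

From HB Require Import structures.
From mathcomp Require Import all_boot all_order all_algebra.
From mathcomp Require Import all_classical all_reals all_analysis.

Set Implicit Arguments.
Unset Strict Implicit.
Unset Printing Implicit Defensive.

Import Order.TTheory GRing.Theory Num.Theory.
Local Open Scope classical_set_scope.
Local Open Scope ring_scope.

(* R^d is represented by d.-tuple R, equipped (by the library) with the
   product sigma-algebra generated by the coordinate maps, which is the
   Borel sigma-algebra of R^d. *)

Definition box (R : realType) (d : nat) (a b : d.-tuple R) : set (d.-tuple R) :=
  [set x | forall i : 'I_d, tnth a i < tnth x i <= tnth b i].

(* mu is Lebesgue measure on the Borel sets of R^d: it gives every box its
   volume.  (This determines mu uniquely on Borel sets.) *)
Definition is_lebesgue_measure (R : realType) (d : nat)
    (mu : set (d.-tuple R) -> \bar R) : Prop :=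
  forall a b : d.-tuple R, (forall i : 'I_d, tnth a i <= tnth b i) ->
    mu (box a b) = (\prod_(i < d) (tnth b i - tnth a i))%:E.

Definition EMstar (R : realType) (dT : measure_display) (T : measurableType dT)
    (d : nat) (P : probability T R) (X : T -> d.-tuple R)
    (leb : set (d.-tuple R) -> \bar R) (t : R) : R :=
  fine (ereal_sup [set (P (X @^-1` O) - t%:E * leb O)%E
                   | O in [set O : set (d.-tuple R) | measurable O]]).

Definition mv_lambda (R : realType) (d : nat)
    (leb : set (d.-tuple R) -> \bar R) (Xs : set (d.-tuple R))
    (f : d.-tuple R -> R) (t : R) : \bar R :=
  leb [set x | Xs x /\ t <= f x].

From HB Require Import structures.
From mathcomp Require Import all_boot all_order all_algebra.
From mathcomp Require Import all_classical all_reals all_analysis.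
From mathcomp Require Import ring lra.
Import Order.TTheory GRing.Theory Num.Theory numFieldNormedType.Exports.
Local Open Scope classical_set_scope.
Local Open Scope ring_scope.

(* For t > 0 the superlevel set Om_t = {x in Xs | t <= f x} maximises
   P(X in Om) - t Leb(Om) (bathtub principle): on Om_t the density is at least
   t and off it at most t, so trading points in or out of Om_t can only lose.
   Evaluating the level-s objective at Om_t gives
     EM*(s) >= EM*(t) - (s - t) lambda(t),
   i.e. -lambda(t) is a subgradient of EM* at t; this alone yields convexity.
   Since the level sets {f = t} carry no mass, lambda is continuous on
   (0, +oo) by continuity of measures along monotone families of superlevel
   sets, and a function with a continuous subgradient is differentiable with
   that subgradient as derivative. *)

Section subgradient.
Context {R : realType}.
Variables (F g : R -> R).
Hypothesis subgrad : forall s t, 0 < s -> 0 < t -> F t - (s - t) * g t <= F s.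

Lemma subgradient_convex (s t a : R) : 0 < s -> 0 < t -> 0 <= a <= 1 ->
  F (a * s + (1 - a) * t) <= a * F s + (1 - a) * F t.
Proof.
move=> s0 t0 /andP[a0 a1].
have u0 : 0 < a * s + (1 - a) * t by nra.
have a1' : 0 <= 1 - a by rewrite subr_ge0.
have := ler_wpM2l a0 (subgrad _ _ s0 u0).
have := ler_wpM2l a1' (subgrad _ _ t0 u0).
by nra.
Qed.

Lemma subgradient_is_derive (t : R) : 0 < t -> {for t, continuous g} ->
  is_derive t 1 F (- g t).
Proof.
move=> t0 gt.
have quotient_cvg : (fun h => h^-1 * (F (h + t) - F t)) @ 0^' --> - g t.
  apply/cvgrPdist_le => e e0.
  have /cvgrPdist_le /(_ e e0) /nbhs0P g_near := gt.
  have /nbhs0P t_near := lt_nbhsr t0.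
  near=> h.
  have h0 : h != 0 by near: h; exact: nbhs_dnbhs_neq.
  have ht0 : 0 < h + t by rewrite addrC; near: h; apply: nbhs_dnbhs; exact: t_near.
  have gh : `|g t - g (h + t)| <= e.
    by rewrite [h + t]addrC; near: h; apply: nbhs_dnbhs; exact: g_near.
  have lower := subgrad _ _ ht0 t0; have upper := subgrad _ _ t0 ht0.
  have -> : - g t - h^-1 * (F (h + t) - F t)
      = - (h^-1 * (F (h + t) - F t + h * g t)) by field.
  rewrite normrN normrM normfV ler_pdivrMl ?normr_gt0 //.
  have D_ge0 : 0 <= F (h + t) - F t + h * g t by lra.
  have D_le : F (h + t) - F t + h * g t <= h * (g t - g (h + t)) by lra.
  rewrite ger0_norm //; apply: (le_trans D_le); apply: (le_trans (ler_norm _)).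
  by rewrite normrM; apply: ler_wpM2l.
have quotientE : (fun h => h^-1 *: ((F \o shift t) (h *: 1) - F t))
    = (fun h => h^-1 * (F (h + t) - F t)).
  by apply/funext => h; rewrite /= [h *: 1]mulr1.
split; rewrite /derivable /derive quotientE; first exact: cvgP quotient_cvg.
exact: cvg_lim quotient_cvg.
Unshelve. all: by end_near. Qed.
End subgradient.

Lemma nonincreasing_continuous {R : realType} (L : R -> R) (t : R) :
  (forall x y, 0 < x -> x <= y -> L y <= L x) ->
  (forall e, 0 < e -> exists2 a, t < a & L t - e <= L a) ->
  (forall e, 0 < e -> exists2 b, 0 < b < t & L b <= L t + e) ->
  {for t, continuous L}.
Proof.
move=> Lmono right left; apply/cvgrPdist_le => e e0.
have [a ta La] := right e e0; have [b /andP[b0 bt] Lb] := left e e0.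
have : \forall x \near t, x \in `]b, a[ by apply: near_in_itvoo; rewrite in_itv /= bt.
apply: filterS => x; rewrite in_itv /= => /andP[bx xa].
have := Lmono _ _ (lt_trans b0 bx) (ltW xa); have := Lmono _ _ b0 (ltW bx).
by rewrite ler_norml; lra.
Qed.

Lemma measure_subset_lty {d : measure_display} {T : semiRingOfSetsType d}
    {R : realFieldType} (m : {content set T -> \bar R}) (A B : set T) :
  measurable A -> measurable B -> A `<=` B -> (m B < +oo)%E -> (m A < +oo)%E.
Proof. by move=> mA mB AB; apply: le_lt_trans; rewrite le_measure ?inE. Qed.

Lemma natSinv_le {R : numFieldType} (m n : nat) :
  (m <= n)%N -> (n.+1%:R : R)^-1 <= m.+1%:R^-1.
Proof. by move=> mn; rewrite lef_pV2 ?posrE ?ltr0Sn // ler_nat ltnS. Qed.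

Definition superlevel {S : Type} {R : numDomainType} (A : set S) (f : S -> R)
    (t : R) : set S :=
  [set x | A x /\ t <= f x].

Definition excess_mass {d : measure_display} {S : measurableType d}
    {R : realType} (nu mu : set S -> \bar R) (t : R) : R :=
  fine (ereal_sup [set (nu O - t%:E * mu O)%E
                   | O in [set O : set S | measurable O]]).

Section bathtub.
Context {R : realType} {d : measure_display} {S : measurableType d}.
Variables (mu nu : {measure set S -> \bar R}) (Xs : set S) (f : S -> R).
Hypotheses (mXs : measurable Xs) (mf : measurable_fun setT f).
Hypothesis f_ge0 : forall x, 0 <= f x.
Hypothesis nu_fin : forall A, measurable A -> nu A \is a fin_num.
Hypothesis nu_density : forall A, measurable A ->
  nu A = (\int[mu]_(x in A) (f x)%:E)%E.
Hypothesis nu_Xs : forall A, measurable A -> nu (A `&` Xs) = nu A.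

Local Notation lambda t := (fine (mu (superlevel Xs f t))).
Let excess (s : R) (A : set S) := fine (nu A) - s * fine (mu A).

Lemma measurable_superlevel t : measurable (superlevel Xs f t).
Proof.
have -> : superlevel Xs f t = Xs `&` f @^-1` `[t, +oo[.
  by apply/seteqP; split => x /=; rewrite in_itv /= andbT.
by apply: measurableI => //; rewrite -[_ @^-1` _]setTI; exact: mf.
Qed.
Local Hint Resolve measurable_superlevel : core.

Lemma density_le A s : measurable A -> 0 <= s ->
  (forall x, A x -> f x <= s) -> (nu A <= s%:E * mu A)%E.
Proof.
move=> mA s0 fs; rewrite nu_density // -integral_cst //.
apply: ge0_le_integral => //; first by move=> x _; rewrite lee_fin.
by apply/measurable_realfun.measurable_EFinP; exact: measurable_funS mf.
Qed.

Lemma density_ge A s : measurable A -> 0 <= s ->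
  (forall x, A x -> s <= f x) -> (s%:E * mu A <= nu A)%E.
Proof.
move=> mA s0 fs; rewrite nu_density // -integral_cst //.
apply: ge0_le_integral => //.
by apply/measurable_realfun.measurable_EFinP; exact: measurable_funS mf.
Qed.

Lemma measure_superlevel_lty t : 0 < t -> (mu (superlevel Xs f t) < +oo)%E.
Proof.
move=> t0; have : (mu (superlevel Xs f t) <= t^-1%:E * nu (superlevel Xs f t))%E.
  by rewrite lee_pdivlMl //; apply: density_ge => //; [exact: ltW|move=> x []].
move/le_lt_trans; apply; apply: lte_mul_pinfty.
- by rewrite lee_fin invr_ge0 ltW.
- by [].
- by rewrite -ge0_fin_numE ?nu_fin.
Qed.

Lemma excess_split s A B : measurable A -> measurable B -> (mu A < +oo)%E ->
  excess s A = excess s (A `&` B) + excess s (A `\` B).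
Proof.
move=> mA mB muA.
have mAB : measurable (A `&` B) by exact: measurableI.
have mAnB : measurable (A `\` B) by exact: measurableD.
have disj : (A `&` B) `&` (A `\` B) = set0.
  by apply/seteqP; split => x // [[_ +] [_ +]].
have splitU (m : {measure set S -> \bar R}) :
    m A = (m (A `&` B) + m (A `\` B))%E.
  by rewrite -measureU // setUIDK.
have fin C : measurable C -> C `<=` A -> mu C \is a fin_num.
  by move=> mC CA; rewrite ge0_fin_numE //; exact: measure_subset_lty muA.
by rewrite /excess (splitU nu) (splitU mu) !fineD ?nu_fin ?fin //; lra.
Qed.

Lemma excess_le0 s B : measurable B -> (mu B < +oo)%E -> 0 <= s ->
  (forall x, B x -> f x <= s) -> excess s B <= 0.
Proof.
move=> mB muB s0 fs; rewrite /excess subr_le0 -lee_fin EFinM.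
by rewrite !fineK ?nu_fin ?ge0_fin_numE //; exact: density_le.
Qed.

Lemma excess_ge0 s B : measurable B -> (mu B < +oo)%E -> 0 <= s ->
  (forall x, B x -> s <= f x) -> 0 <= excess s B.
Proof.
move=> mB muB s0 fs; rewrite /excess subr_ge0 -lee_fin EFinM.
by rewrite !fineK ?nu_fin ?ge0_fin_numE //; exact: density_ge.
Qed.

Lemma excess_le_superlevel s O : 0 < s -> measurable O -> (mu O < +oo)%E ->
  excess s O <= excess s (superlevel Xs f s).
Proof.
move=> s0 mO muO; have mL := measurable_superlevel s.
have muL := measure_superlevel_lty _ s0.
set L := superlevel Xs f s in mL muL *; set O' := O `&` Xs.
have mO' : measurable O' by exact: measurableI.
have muO' : (mu O' < +oo)%E by apply: measure_subset_lty muO => //; exact: subIsetl.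
have restrict : excess s O <= excess s O'.
  rewrite /excess /O' nu_Xs // lerD2l lerN2 ler_pM2l // fine_le ?ge0_fin_numE //.
  by rewrite le_measure ?inE //; exact: subIsetl.
have below : excess s (O' `\` L) <= 0.
  have mB : measurable (O' `\` L) by exact: measurableD.
  apply: excess_le0 => //; [|exact: ltW|].
  - by apply: measure_subset_lty muO' => //; exact: subDsetl.
  - move=> x [[_ Xx] Lx]; rewrite leNgt; apply/negP => /ltW sx.
    by apply: Lx; split.
have above : 0 <= excess s (L `\` O').
  have mC : measurable (L `\` O') by exact: measurableD.
  apply: excess_ge0 => //; [|exact: ltW|].
  - by apply: measure_subset_lty muL => //; exact: subDsetl.
  - by move=> x [[]].
apply: (le_trans restrict).
rewrite (excess_split s O' L) // [excess s L](excess_split s L O') // setIC.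
by lra.
Qed.

Lemma excess_mass_superlevel s : 0 < s ->
  excess_mass nu mu s = excess s (superlevel Xs f s).
Proof.
move=> s0; have mL := measurable_superlevel s; have muL := measure_superlevel_lty _ s0.
rewrite /excess_mass; set E := ereal_sup _.
suff -> : E = (excess s (superlevel Xs f s))%:E by [].
apply/eqP; rewrite eq_le; apply/andP; split.
- apply: ge_ereal_sup => _ [B mB <-]; rewrite -(fineK (nu_fin _ mB)).
  have [muB|] := ltP (mu B) +oo%E.
    rewrite -(fineK (_ : mu B \is a fin_num)) ?ge0_fin_numE //.
    by rewrite -EFinM -EFinB lee_fin; exact: excess_le_superlevel.
  by rewrite leye_eq => /eqP ->; rewrite mulry gtr0_sg // mul1e leNye.
- apply: ereal_sup_ubound; exists (superlevel Xs f s) => //.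
  by rewrite /excess EFinB EFinM !fineK ?nu_fin ?ge0_fin_numE.
Qed.

Lemma excess_mass_subgradient s t : 0 < s -> 0 < t ->
  excess_mass nu mu t - (s - t) * lambda t <= excess_mass nu mu s.
Proof.
move=> s0 t0; rewrite !excess_mass_superlevel //.
have := excess_le_superlevel _ _ s0 (measurable_superlevel t)
  (measure_superlevel_lty _ t0).
by rewrite /excess; lra.
Qed.

Lemma lambda_nonincreasing s s' : 0 < s -> s <= s' -> lambda s' <= lambda s.
Proof.
move=> s0 ss'; have s'0 := lt_le_trans s0 ss'.
rewrite fine_le ?ge0_fin_numE ?measure_superlevel_lty //.
rewrite le_measure ?inE //.
by move=> x [Xx sx]; split => //; exact: le_trans sx.
Qed.

Hypothesis nu_level0 : forall c, 0 < c -> nu [set x | f x = c] = 0%E.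

Lemma lambda_right_approx t : 0 < t ->
  forall e, 0 < e -> exists2 a, t < a & lambda t - e <= lambda a.
Proof.
move=> t0 e e0; have mL := measurable_superlevel t.
set L := superlevel Xs f t in mL *; set E := [set x | f x = t].
have mE : measurable E.
  by rewrite -[E]setTI; exact: mf measurableT _ (measurable_set1 t).
have muL : (mu L < +oo)%E := measure_superlevel_lty _ t0.
pose F n := superlevel Xs f (t + n.+1%:R^-1).
have F_nd : {homo F : n m / (n <= m)%N >-> (n <= m)%O}.
  move=> n m nm; rewrite subsetEset => x [Xx fx]; split => //.
  by apply: le_trans fx; rewrite lerD2l natSinv_le.
have UF : \bigcup_n F n = L `\` E.
  apply/seteqP; split => x.
  - move=> [n _ [Xx fx]]; have tfx : t < f x.
      by apply: lt_le_trans fx; rewrite ltrDl invr_gt0.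
    by split; [split => //; exact: ltW|move=> /= fxt; rewrite fxt ltxx in tfx].
  - move=> [[Xx tx] /eqP fxt]; have /ltr_add_invr[n tn] : t < f x.
      by rewrite lt_neqAle eq_sym fxt.
    by exists n => //; split => //; exact: ltW.
have null_level : mu (L `&` E) = 0%E.
  have mLE : measurable (L `&` E) by exact: measurableI.
  have : (t%:E * mu (L `&` E) <= 0)%E.
    apply: (le_trans (density_ge _ _ mLE (ltW t0) _)); first by move=> x [[]].
    by rewrite -(nu_level0 _ t0) le_measure ?inE //; exact: subIsetr.
  rewrite pmule_rle0 ?lte_fin // => null_le0.
  by apply/eqP; rewrite eq_le null_le0 measure_ge0.
have mUF : measurable (\bigcup_n F n) by rewrite UF; exact: measurableD.
have : mu (F n) @[n --> \oo] --> mu (L `\` E).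
  rewrite -UF; exact: nondecreasing_cvg_mu (fun=> measurable_superlevel _)
    mUF F_nd.
rewrite measureD //= null_level sube0 -[X in _ --> X]fineK ?ge0_fin_numE //.
move=> /fine_cvgP[_ /cvgrPdist_le /(_ e e0) [N _ /(_ N (leqnn N)) /= LN]].
exists (t + N.+1%:R^-1); first by rewrite ltrDl invr_gt0.
by move: LN; rewrite ler_norml => /andP[_]; lra.
Qed.

Lemma lambda_left_approx t : 0 < t ->
  forall e, 0 < e -> exists2 b, 0 < b < t & lambda b <= lambda t + e.
Proof.
move=> t0 e e0; have [m] := ltr_add_invr t0; rewrite add0r => mt.
pose s n := t - (n + m).+1%:R^-1.
have s_gt0 n : 0 < s n.
  by rewrite subr_gt0 (le_lt_trans _ mt) // natSinv_le // leq_addl.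
have s_lt n : s n < t by rewrite ltrBlDr ltrDl invr_gt0.
pose G n := superlevel Xs f (s n).
have G_ni : {homo G : n n' / (n <= n')%N >-> (n' <= n)%O}.
  move=> n n' nn'; rewrite subsetEset => x [Xx fx]; split => //.
  by apply: le_trans fx; rewrite lerD2l lerN2 natSinv_le // leq_add2r.
have IG : \bigcap_n G n = superlevel Xs f t.
  apply/seteqP; split => x.
  - move=> Gx; have [Xx _] := Gx 0%N I; split => //.
    rewrite leNgt; apply/negP => /ltr_add_invr[k fk].
    have [_] := Gx k I; rewrite /s => ta.
    have := @natSinv_le R _ _ (leq_addr m k); apply/negP; rewrite -ltNge.
    by rewrite -(ltrD2l (f x)); apply: (lt_le_trans fk); rewrite -lerBlDr.
  - by move=> [Xx tx] n _; split => //; exact: le_trans (ltW (s_lt n)) tx.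
have mIG : measurable (\bigcap_n G n) by rewrite IG.
have : mu (G n) @[n --> \oo] --> mu (superlevel Xs f t).
  rewrite -IG; exact: nonincreasing_cvg_mu (measure_superlevel_lty _ (s_gt0 0%N))
    (fun=> measurable_superlevel _) mIG G_ni.
rewrite -[X in _ --> X]fineK ?ge0_fin_numE ?measure_superlevel_lty //.
move=> /fine_cvgP[_ /cvgrPdist_le /(_ e e0) [N _ /(_ N (leqnn N)) /= LN]].
exists (s N); first by rewrite s_gt0 s_lt.
by move: LN; rewrite ler_norml => /andP[]; lra.
Qed.

Lemma lambda_continuous t : 0 < t -> {for t, continuous (fun s => lambda s)}.
Proof.
move=> t0; apply: nonincreasing_continuous.
- exact: lambda_nonincreasing.
- exact: lambda_right_approx.
- exact: lambda_left_approx.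
Qed.

End bathtub.

Theorem proposition1 (R : realType) (d : nat)
  (dT : measure_display) (T : measurableType dT) (P : probability T R)
  (leb : {measure set (d.-tuple R) -> \bar R})
  (Hleb : is_lebesgue_measure leb)
  (Xs : set (d.-tuple R)) (mXs : measurable Xs)
  (X : T -> d.-tuple R) (mX : measurable_fun setT X)
  (XinXs : forall w, Xs (X w))
  (f : d.-tuple R -> R) (mf : measurable_fun setT f)
  (f_ge0 : forall x, 0 <= f x)
  (f_density : forall A : set (d.-tuple R), measurable A ->
     P (X @^-1` A) = (\int[leb]_(x in A) (f x)%:E)%E)
  (f_bounded : exists M : R, forall x, f x <= M)
  (f_level_null : forall c : R, 0 <= c -> P (X @^-1` [set x | f x = c]) = 0%E) :
  (forall t : R, 0 < t ->
     exists l : R, mv_lambda leb Xs f t = l%:E /\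
       is_derive t 1 (EMstar P X leb) (- l)) /\
  (forall s t a : R, 0 < s -> 0 < t -> 0 <= a <= 1 ->
     EMstar P X leb (a * s + (1 - a) * t)
       <= a * EMstar P X leb s + (1 - a) * EMstar P X leb t).
Proof.
(* [nu] is [pushforward P X], the distribution of [X], packed as a measure. *)
pose nu := measure_function_pushforward__canonical__measure_function_Measure P mX.
have nu_fin A : measurable A -> nu A \is a fin_num.
  move=> mA; apply: fin_num_measure.
  by rewrite -[X @^-1` A]setTI; exact: (mX measurableT).
have nu_Xs A : measurable A -> nu (A `&` Xs) = nu A.
  move=> _; rewrite /= /pushforward preimage_setI.
  rewrite (_ : X @^-1` Xs = setT) ?setIT //.
  by apply/seteqP; split => w // _; exact: XinXs.
have nu_level0 c : 0 < c -> nu [set x | f x = c] = 0%E.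
  by move=> c0; exact: f_level_null (ltW c0).
pose lambda s := fine (leb (superlevel Xs f s)).
have subgrad : forall s t, 0 < s -> 0 < t ->
    excess_mass nu leb t - (s - t) * lambda t <= excess_mass nu leb s.
  exact: excess_mass_subgradient leb nu Xs f mXs mf f_ge0 nu_fin f_density nu_Xs.
have -> : EMstar P X leb = excess_mass nu leb by [].
split; last exact: subgradient_convex _ lambda subgrad.
move=> t t0; exists (lambda t); split.
  rewrite fineK // ge0_fin_numE //.
  exact: measure_superlevel_lty leb nu Xs f mXs mf nu_fin f_density t t0.
apply: (subgradient_is_derive _ _ subgrad _ t0).
exact: (lambda_continuous leb nu Xs f mXs mf nu_fin f_density nu_level0 _ t0).
Qed.
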